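(* Let $G$ be a finite simple graph of order $n$ having no connected component of order less than $3$, and let $\mathcal{G}$ be an arbitrary Abelian group of order at least $2n$. Then there exists a labeling $f\colon E(G)\to\mathcal{G}$ such that $f(e)\neq 0$ for every edge $e$, the weighted degrees $w_f(v)$, $v\in V(G)$, are pairwise distinct, and $w_f(v)\neq 0$ for every vertex $v$.
   Context: For an Abelian group $\mathcal{G}$ (written additively, with identity $0$) and a labeling $f\colon E(G)\to\mathcal{G}$, the weighted degree (weight) of a vertex $v$ is $w_f(v)=\sum_{u\in N(v)} f(uv)$, the sum taken in $\mathcal{G}$. *)

From mathcomp Require Import all_boot all_algebra.
Set Implicit Arguments. Unset Strict Implicit. Unset Printing Implicit Defensive.
Import GRing.Theory.
Local Open Scope ring_scope.

Definition simple_graph (T : finType) (e : rel T) : Prop :=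
  irreflexive e /\ symmetric e.

Definition component (T : finType) (e : rel T) (x : T) : {set T} :=
  [set y | connect e x y].

(* An edge labeling is a function on unordered pairs {u,v} (as 2-element sets);
   only its values on edges matter. Weighted degree of v: sum over neighbours u
   of the label of the edge uv. *)
Definition wdeg (T : finType) (e : rel T) (G : zmodType)
  (f : {set T} -> G) (v : T) : G :=
  \sum_(u | e v u) f [set v; u].

From mathcomp Require Import all_boot all_algebra.
Set Implicit Arguments. Unset Strict Implicit. Unset Printing Implicit Defensive.
Import GRing.Theory.
Local Open Scope ring_scope.

(* Edges are labelled one at a time, keeping the weights of the vertices met
   by a labelled edge pairwise distinct and nonzero; all other vertices have
   weight 0.  Labelling a new edge uv with t shifts the weights of u and v by
   t, and at most 2n - 1 values of t spoil the invariant, provided w(u) and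
   w(v) differ beforehand; since |G| >= 2n some t is left.  The proviso holds
   when u or v is already met.  Otherwise, as components have order >= 3,
   there is a path a - b - c with a, b unmet; if c is met too, bc is an edge
   of the first kind, and if not, labelling ab first with a value outside 0
   and the current weights makes w(b) <> w(c). *)

Lemma set2_eqr (T : finType) (x y z : T) :
  x != z -> ([set x; z] == [set x; y]) = (z == y).
Proof.
move=> xz; apply/eqP/eqP => [E|-> //].
have /set2P[zx|//] : z \in [set x; y] by rewrite -E set22.
by rewrite zx eqxx in xz.
Qed.

Section Weights.
Variables (T : finType) (G : finZmodType).
Implicit Types (w : T -> G) (A B : {set T}).

Definition distinct_nonzero_on w A :=
  {in A &, injective w} /\ {in A, forall z, w z != 0}.

Lemma eq_in_distinct_nonzero_on w1 w2 A : {in A, w1 =1 w2} ->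
  distinct_nonzero_on w1 A -> distinct_nonzero_on w2 A.
Proof.
move=> eqw [inj nz].
by split=> [x y xA yA|z zA]; rewrite -!eqw //; [apply: inj | apply: nz].
Qed.

Lemma distinct_nonzero_onS w A B : B \subset A ->
  distinct_nonzero_on w A -> distinct_nonzero_on w B.
Proof.
move=> /subsetP sBA [inj nz].
by split=> [x y /sBA xA /sBA yA|z /sBA zA]; [apply: inj | apply: nz].
Qed.

Lemma distinct_nonzero_onU1 w A a : distinct_nonzero_on w A -> w a != 0 ->
  (forall z, z \in A -> w z != w a) -> distinct_nonzero_on w (a |: A).
Proof.
move=> [inj nz] wa0 fresh; split=> [x y|z].
- case/setU1P=> [->|xA]; case/setU1P=> [->|yA] // E.
  + by move: (fresh y yA); rewrite E eqxx.
  + by move: (fresh x xA); rewrite E eqxx.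
  + exact: inj.
- by case/setU1P=> [->|/nz].
Qed.

Lemma exists_notin (C : {set G}) : (#|C| < #|G|)%N -> exists t, t \notin C.
Proof.
move=> ltCG; have /card_gt0P[t] : (0 < #|~: C|)%N.
  by rewrite -(ltn_add2l #|C|) addn0 cardsC.
by rewrite inE; exists t.
Qed.

Definition bump (u v : T) (t : G) : T -> G :=
  fun z => if z \in [set u; v] then t else 0.

Hypothesis bigG : (2 * #|T| <= #|G|)%N.

Lemma exists_bump_distinct_nonzero w A u v : u != v -> w u != w v ->
  distinct_nonzero_on w (A :\: [set u; v]) ->
  exists2 t, t != 0 & distinct_nonzero_on (w \+ bump u v t) (A :|: [set u; v]).
Proof.
move=> uv wuv [inj nz].
(* The new weights [w u + t] and [w v + t] must avoid [X]. *)
pose X := 0 |: [set w z | z in ~: [set u; v]].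
pose C := 0 |: ([set x - w u | x in X] :|: [set x - w v | x in X]).
have cardX : (#|X| < #|T|)%N.
  rewrite -(cardsC [set u; v]) cards2 uv /X cardsU1 -addSn.
  exact: leq_add (leq_b1 _) (leq_imset_card _ _).
have cardC : (#|C| <= 1 + (#|X| + #|X|))%N.
  rewrite /C cardsU1; apply: leq_add (leq_b1 _) _.
  apply: leq_trans (leq_card_setU _ _).1 _.
  exact: leq_add (leq_imset_card _ _) (leq_imset_card _ _).
have [t tC] : exists t, t \notin C.
  apply/exists_notin/(leq_trans _ bigG)/(leq_ltn_trans cardC).
  by rewrite mul2n -addnn add1n -addnS -addSn leq_add.
have wX z : z \notin [set u; v] -> w z \in X.
  by move=> zuv; rewrite setU1r // imset_f // inE.
have fresh z x : z \in [set u; v] -> x \in X -> w z + t != x.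
  move=> /set2P[]-> xX; apply: contraNneq tC => tE; apply/setU1r.
  - by apply/setUP; left; apply/imsetP; exists x; rewrite // -tE addrC addKr.
  - by apply/setUP; right; apply/imsetP; exists x; rewrite // -tE addrC addKr.
have inj_uv : {in [set u; v] &, injective w}.
  by move=> x y /set2P[]-> /set2P[]-> // E; move: wuv; rewrite E eqxx.
have shiftE z : (w \+ bump u v t) z = if z \in [set u; v] then w z + t else w z.
  by rewrite /= /bump; case: ifP; rewrite ?addr0.
have inA z : z \in A :|: [set u; v] -> z \notin [set u; v] ->
    z \in A :\: [set u; v].
  by rewrite !inE => /orP[-> ->|->].
exists t; first by apply: contraNneq tC => ->; apply: setU11.
split=> [x y xA yA|z zA]; rewrite !shiftE.
- case: (boolP (x \in [set u; v])) => xuv;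
    case: (boolP (y \in [set u; v])) => yuv.
  + by move/addIr; apply: inj_uv.
  + by move=> E; move: (fresh x _ xuv (wX y yuv)); rewrite E eqxx.
  + by move=> E; move: (fresh y _ yuv (wX x xuv)); rewrite -E eqxx.
  + by apply: inj; apply: inA.
- case: ifP => [zuv|/negbT zuv]; first exact: fresh zuv (setU11 _ _).
  by apply: nz; apply: inA.
Qed.

End Weights.

Section Labelings.
Variables (T : finType) (G : finZmodType) (e : rel T).
Hypotheses (e_irr : irreflexive e) (e_sym : symmetric e).
Implicit Types (f : {set T} -> G).

Definition edge_delta (u v : T) (t : G) : {set T} -> G :=
  fun s => if s == [set u; v] then t else 0.

Lemma wdeg_add f1 f2 : wdeg e (f1 \+ f2) =1 wdeg e f1 \+ wdeg e f2.
Proof. by move=> z; rewrite /wdeg /= -big_split. Qed.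

Lemma edge_neq u v : e u v -> u != v.
Proof. by apply: contraTneq => ->; rewrite e_irr. Qed.

Lemma wdeg_edge_delta u v t : e u v -> wdeg e (edge_delta u v t) =1 bump u v t.
Proof.
move=> euv z; rewrite /wdeg /bump /edge_delta -big_mkcondr /=.
have uv := edge_neq euv.
case: ifP => [/set2P[]-> | /negbT zuv].
- apply: (big_pred1 v) => y /=.
  have [<-|uy] := eqVneq u y; first by rewrite e_irr (negbTE uv).
  by rewrite set2_eqr // andb_idl // => /eqP ->.
- apply: (big_pred1 u) => y /=; rewrite [[set u; v]]setUC.
  have [<-|vy] := eqVneq v y; first by rewrite e_irr /= eq_sym (negbTE uv).
  by rewrite set2_eqr // andb_idl // => /eqP ->; rewrite e_sym.
- rewrite big_pred0 // => y; apply/negbTE/nandP; right.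
  by apply: contraNneq zuv => <-; rewrite set21.
Qed.

(* A partial labelling gives label 0 to the edges not labelled yet. *)
Definition covered f : {set T} :=
  [set x | [exists y, e x y && (f [set x; y] != 0)]].

Definition unlabelled f : nat :=
  #|[set p : T * T | e p.1 p.2 && (f [set p.1; p.2] == 0)]|.

Definition good f := distinct_nonzero_on (wdeg e f) (covered f).

Lemma label_uncovered f x y : x \notin covered f -> e x y -> f [set x; y] = 0.
Proof.
move=> xc exy; apply/eqP; apply: contraNT xc => fxy.
by rewrite inE; apply/existsP; exists y; rewrite exy.
Qed.

Lemma wdeg_uncovered f x : x \notin covered f -> wdeg e f x = 0.
Proof. by move=> xc; apply: big1 => y; apply: label_uncovered. Qed.

Lemma covered_add_edge f u v t :
  covered (f \+ edge_delta u v t) \subset covered f :|: [set u; v].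
Proof.
apply/subsetP => x; rewrite inE => /existsP[y /andP[exy]].
rewrite /= /edge_delta; case: ifP => [/eqP E _|_].
  by apply/setUP; right; rewrite -E set21.
rewrite addr0 => fxy; apply/setUP; left.
by rewrite inE; apply/existsP; exists y; rewrite exy.
Qed.

Lemma unlabelled_add_edge f u v t : e u v -> f [set u; v] = 0 -> t != 0 ->
  (unlabelled (f \+ edge_delta u v t) < unlabelled f)%N.
Proof.
move=> euv fuv t0; apply: proper_card; apply/properP; split.
- apply/subsetP => -[x y]; rewrite !inE /= /edge_delta => /andP[-> /=].
  by case: ifP => [/eqP ->|_]; rewrite ?addr0 // fuv add0r (negbTE t0).
- by exists (u, v); rewrite !inE /= /edge_delta euv fuv ?eqxx ?add0r.
Qed.

Lemma good_add_edge f u v t (A : {set T}) : e u v ->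
  covered f \subset A :|: [set u; v] ->
  distinct_nonzero_on (wdeg e f \+ bump u v t) (A :|: [set u; v]) ->
  good (f \+ edge_delta u v t).
Proof.
move=> euv sfA dnz; apply: (distinct_nonzero_onS (A := A :|: [set u; v])).
  apply: subset_trans (covered_add_edge f u v t) _.
  by rewrite subUset sfA subsetUr.
apply: eq_in_distinct_nonzero_on dnz => z _.
by rewrite wdeg_add /= wdeg_edge_delta.
Qed.

Hypothesis big_components : forall x, (3 <= #|component e x|)%N.

Lemma exists_edge_leaving (A : {set T}) x : x \in A -> (#|A| <= 2)%N ->
  exists p q, [/\ p \in A, q \notin A & e p q].
Proof.
move=> xA cardA.
have [[p q] /and3P[pA qA epq] | none] :=
  pickP [pred pq : T * T | [&& pq.1 \in A, pq.2 \notin A & e pq.1 pq.2]].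
  by exists p, q.
have closedA : closed e A.
  apply: (intro_closed (sym_connect_sym e_sym)) => p q epq pA.
  by apply: contraFT (none (p, q)) => qA; rewrite /= pA qA epq.
have : component e x \subset A.
  by apply/subsetP => z; rewrite inE => /(closed_connect closedA); rewrite xA.
by move/subset_leq_card/leq_trans/(_ cardA); rewrite leqNgt big_components.
Qed.

Hypothesis bigG : (2 * #|T| <= #|G|)%N.

Lemma good_step_covered f u v : good f -> e u v -> f [set u; v] = 0 ->
  (u \in covered f) || (v \in covered f) ->
  exists2 g, good g & (unlabelled g < unlabelled f)%N.
Proof.
move=> gf euv fuv uv_cov; have [inj nz] := gf; have uv := edge_neq euv.
have wuv : wdeg e f u != wdeg e f v.
  case: (boolP (u \in covered f)) => uc; case: (boolP (v \in covered f)) => vc.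
  - by apply: contra uv => /eqP/inj ->.
  - by rewrite (wdeg_uncovered vc) nz.
  - by rewrite (wdeg_uncovered uc) eq_sym nz.
  - by rewrite (negbTE uc) (negbTE vc) in uv_cov.
have [t t0 dnz] := exists_bump_distinct_nonzero bigG uv wuv
  (distinct_nonzero_onS (subsetDl _ _) gf).
exists (f \+ edge_delta u v t); last exact: unlabelled_add_edge.
by apply: good_add_edge dnz; rewrite ?subsetUl.
Qed.

Lemma distinct_nonzero_on_fresh_edge f a b t : good f -> e b a ->
  a \notin covered f -> b \notin covered f ->
  t \notin 0 |: [set wdeg e f z | z in covered f] ->
  distinct_nonzero_on (wdeg e (f \+ edge_delta b a t)) (a |: covered f).
Proof.
move=> gf eba a_unc b_unc tC.
have wE z : wdeg e (f \+ edge_delta b a t) z = wdeg e f z + bump b a t z.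
  by rewrite wdeg_add /= wdeg_edge_delta.
have w_cov z : z \in covered f -> wdeg e (f \+ edge_delta b a t) z = wdeg e f z.
  move=> zc; rewrite wE /bump ifN ?addr0 //; apply/set2P => -[zE|zE].
  - by move: b_unc; rewrite -zE zc.
  - by move: a_unc; rewrite -zE zc.
have wa : wdeg e (f \+ edge_delta b a t) a = t.
  by rewrite wE /bump set22 (wdeg_uncovered a_unc) add0r.
apply: distinct_nonzero_onU1.
- exact: eq_in_distinct_nonzero_on (fun z zc => esym (w_cov z zc)) gf.
- by rewrite wa; apply: contraNneq tC => ->; apply: setU11.
- move=> z zc; rewrite wa w_cov //.
  by apply: contraNneq tC => <-; rewrite setU1r ?imset_f.
Qed.

Lemma good_step_path f a b c : good f -> e b a -> e b c -> a != c ->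
  a \notin covered f -> b \notin covered f -> c \notin covered f ->
  exists2 g, good g & (unlabelled g < unlabelled f)%N.
Proof.
move=> gf eba ebc ac a_unc b_unc c_unc.
have [t1 t1C] : exists t, t \notin 0 |: [set wdeg e f z | z in covered f].
  have n2 : (1 < #|T|)%N by have := max_card [set a; c]; rewrite cards2 ac.
  apply/exists_notin/(leq_trans _ bigG); rewrite cardsU1 -addSn mul2n -addnn.
  apply: leq_add (leq_ltn_trans (leq_b1 _) n2) _.
  exact: leq_trans (leq_imset_card _ _) (max_card _).
have t10 : t1 != 0 by apply: contraNneq t1C => ->; apply: setU11.
pose f1 := f \+ edge_delta b a t1.
have bc := edge_neq ebc.
have w1bc : wdeg e f1 b != wdeg e f1 c.
  rewrite !wdeg_add /= !wdeg_edge_delta // /bump set21 ifN.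
    by rewrite (wdeg_uncovered b_unc) (wdeg_uncovered c_unc) add0r addr0.
  by apply/set2P => -[cb|ca]; [move: bc | move: ac]; rewrite ?cb ?ca eqxx.
have [t2 t20 dnz2] := exists_bump_distinct_nonzero bigG bc w1bc
  (distinct_nonzero_onS (subsetDl _ _)
     (distinct_nonzero_on_fresh_edge gf eba a_unc b_unc t1C)).
exists (f1 \+ edge_delta b c t2).
  apply: good_add_edge dnz2 => //.
  apply: subset_trans (covered_add_edge f b a t1) _.
  by apply/subsetP => z; rewrite !inE => /orP[->|/orP[]->]; rewrite ?orbT.
have f1bc : f1 [set b; c] = 0.
  rewrite /f1 /= /edge_delta set2_eqr // eq_sym (negbTE ac).
  by rewrite (label_uncovered b_unc ebc) addr0.
apply: leq_trans (unlabelled_add_edge ebc f1bc t20) (ltnW _).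
exact: unlabelled_add_edge eba (label_uncovered b_unc eba) t10.
Qed.

Lemma good_step_fork f a b c : good f -> e b a -> e b c -> a != c ->
  a \notin covered f -> b \notin covered f ->
  exists2 g, good g & (unlabelled g < unlabelled f)%N.
Proof.
move=> gf eba ebc ac a_unc b_unc.
have [c_cov|c_unc] := boolP (c \in covered f).
  apply: good_step_covered gf ebc (label_uncovered b_unc ebc) _.
  by rewrite c_cov orbT.
exact: good_step_path gf eba ebc ac a_unc b_unc c_unc.
Qed.

Lemma good_step f x y : good f -> e x y -> f [set x; y] = 0 ->
  exists2 g, good g & (unlabelled g < unlabelled f)%N.
Proof.
move=> gf exy fxy.
have [xy_cov|/norP[x_unc y_unc]] :=
  boolP ((x \in covered f) || (y \in covered f)).
  exact: good_step_covered gf exy fxy xy_cov.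
have small : (#|[set x; y]| <= 2)%N by rewrite cards2 ltnS leq_b1.
have [p [q [/set2P[]-> qxy epq]]] := exists_edge_leaving (set21 x y) small.
- apply: good_step_fork gf exy epq _ y_unc x_unc.
  by apply: contraNneq qxy => <-; apply: set22.
- apply: good_step_fork gf _ epq _ x_unc y_unc; first by rewrite e_sym.
  by apply: contraNneq qxy => <-; apply: set21.
Qed.

Lemma good_extends f : good f ->
  exists2 g, good g & forall x y, e x y -> g [set x; y] != 0.
Proof.
have [n] := ubnP (unlabelled f); elim: n f => // n IH f lt_fn gf.
have [[x y] /andP[/= exy /eqP fxy] | full] :=
  pickP [pred p : T * T | e p.1 p.2 && (f [set p.1; p.2] == 0)].
  have [g gg lt_gf] := good_step gf exy fxy.
  exact: IH _ (leq_trans lt_gf lt_fn) gg.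
by exists f => // x y exy; move: (full (x, y)); rewrite /= exy => /negbT.
Qed.

End Labelings.

Theorem theorem3 (T : finType) (e : rel T) (G : finZmodType) :
  simple_graph e ->
  (forall x : T, 3 <= #|component e x|)%N ->
  (2 * #|T| <= #|G|)%N ->
  exists f : {set T} -> G,
    [/\ forall u v : T, e u v -> f [set u; v] != 0,
        injective (wdeg e f)
      & forall v : T, wdeg e f v != 0].
Proof.
move=> [e_irr e_sym] big_components bigG.
have good0 : good e (fun=> 0 : G).
  by split=> [x y|x]; rewrite inE => /existsP[? /andP[_ /eqP]].
have [f [inj nz] labelled] :=
  good_extends e_irr e_sym big_components bigG good0.
have covered_all v : v \in covered e f.
  have small : (#|[set v]| <= 2)%N by rewrite cards1.
  have [_ [q [/set1P -> _ evq]]] :=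
    exists_edge_leaving e_sym big_components (set11 v) small.
  by rewrite inE; apply/existsP; exists q; rewrite evq labelled.
by exists f; split=> // [x y|v]; [apply: inj | apply: nz].
Qed.
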